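(* Let $\mathcal{V}$ be an entropic Jónsson–Tarski variety and $A$ a $\mathcal{V}$-algebra. Then: (1) $Inv(A)$ is a $\mathcal{V}$-subalgebra of $A$ (with embedding $\upsilon_A$) and hence an internal submonoid of the internal monoid $(A,+^A,0)$. (2) Every $\mathcal{V}$-homomorphism $f\colon A\to B$ restricts and corestricts to a $\mathcal{V}$-homomorphism $Inv(A)\to Inv(B)$. In particular, for every $\mathcal{V}$-algebra $B$ and every $b\in B$, the homomorphism $b_r\colon A\to A\otimes B$, $a\mapsto a\otimes b$, restricts to a homomorphism $Inv(A)\to Inv(A\otimes B)$; hence $\upsilon_A\otimes\upsilon_B$ factors as $Inv(A)\otimes Inv(B)\xrightarrow{\upsilon_{A,B}} Inv(A\otimes B)\hookrightarrow A\otimes B$; moreover, for every monoid $(A,m,e)$ in $\mathcal{V}$ and all $a,b\in Inv(A)$ one has $m(a\otimes b)\in Inv(A)$. (3) For every $\mathcal{V}$-homomorphism $f\colon A\to B$ and every $x\in Inv(A)$ one has $f(-x)=-f(x)$. (4) The map $i\colon Inv(A)\to Inv(A)$, $x\mapsto -x$, is a $\mathcal{V}$-homomorphism. Consequently $Inv(A)$ is a commutative internal group in $\mathcal{V}$, and in fact the largest internal group contained in $A$.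
   Context: A variety is a finitary one-sorted variety of algebras. It is entropic if its algebraic theory is commutative (every operation is a homomorphism); then it is a symmetric monoidal closed category under the entropic tensor product $A\otimes B$, characterized by a bimorphism $A\times B\to A\otimes B$, $(a,b)\mapsto a\otimes b$, through which every bimorphism (map homomorphic in each variable separately) $A\times B\to C$ factors uniquely via a homomorphism $A\otimes B\to C$; the unit object is the free algebra $F1$ on one generator. A Jónsson–Tarski variety has a nullary operation $0$ and a binary operation $+$ with $x+0=x=0+x$; in an entropic one, $(A,+^A,0)$ is a commutative internal monoid in $\mathcal{V}$. An element $x\in A$ is invertible if there is $y\in A$ with $x+y=0=y+x$; such $y$ is unique and denoted $-x$. $Inv(A)$ denotes the set of invertible elements of $A$. A monoid in $\mathcal{V}$ is a triple $(A,m,e)$ with homomorphisms $m\colon A\otimes A\to A$, $e\colon F1\to A$ satisfying associativity and unit laws. An internal group in $\mathcal{V}$ is a group object in the category $\mathcal{V}$ (with respect to finite products). *)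

From mathcomp Require Import all_boot.
From Stdlib Require Import ClassicalEpsilon.

Unset Printing Implicit Defensive.

Record signature := Signature { op : Type; arity : op -> nat }.
Arguments arity {s} _ : rename.

Record algebra (S : signature) := Algebra {
  carrier :> Type;
  interp : forall o : op S, ('I_(arity o) -> carrier) -> carrier }.
Arguments interp {S} a o _ : rename.

Inductive term (S : signature) (X : Type) : Type :=
| Var : X -> term S X
| App : forall o : op S, ('I_(arity o) -> term S X) -> term S X.
Arguments Var {S X} x.
Arguments App {S X} o args.

Fixpoint eval (S : signature) (X : Type) (A : algebra S) (env : X -> A)
  (t : term S X) : A :=
  match t with
  | Var x => env x
  | App o args => interp A o (fun i => @eval S X A env (args i))
  end.
Arguments eval {S X} A env t.

Record variety := Variety {
  vsig : signature;
  axioms : term vsig nat -> term vsig nat -> Prop }.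

Definition in_variety (V : variety) (A : algebra (vsig V)) : Prop :=
  forall l r, axioms V l r -> forall env : nat -> A, eval A env l = eval A env r.

Definition hom (S : signature) (A B : algebra S) (f : A -> B) : Prop :=
  forall o (args : 'I_(arity o) -> A),
    f (interp A o args) = interp B o (fun i => f (args i)).
Arguments hom {S A B} f.

Definition op_closed (S : signature) (A : algebra S) (P : A -> Prop) : Prop :=
  forall o (args : 'I_(arity o) -> A), (forall i, P (args i)) -> P (interp A o args).
Arguments op_closed {S A} P.

Definition subalg (S : signature) (A : algebra S) (P : A -> Prop)
  (H : op_closed P) : algebra S :=
  {| carrier := {x : A | P x};
     interp := fun o args =>
       exist P (interp A o (fun i => proj1_sig (args i)))
             (H o _ (fun i => proj2_sig (args i))) |}.
Arguments subalg {S A P} H.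

Definition entropic (V : variety) : Prop :=
  forall A : algebra (vsig V), in_variety V A ->
  forall (o1 o2 : op (vsig V)) (x : 'I_(arity o1) -> 'I_(arity o2) -> A),
    interp A o1 (fun i => interp A o2 (fun j => x i j)) =
    interp A o2 (fun j => interp A o1 (fun i => x i j)).

Section JT.
Variable S : signature.
Variables (z : term S Empty_set) (p : term S bool).

Definition zeroA (A : algebra S) : A :=
  eval A (fun e : Empty_set => match e with end) z.
Definition plusA (A : algebra S) (x y : A) : A :=
  eval A (fun b : bool => if b then x else y) p.

Definition is_inverse (A : algebra S) (x y : A) : Prop :=
  plusA A x y = zeroA A /\ plusA A y x = zeroA A.

Definition Inv (A : algebra S) (x : A) : Prop := exists y, is_inverse A x y.

(* -x : the (unique when it exists) inverse of x *)
Definition negA (A : algebra S) (x : A) : A :=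
  epsilon (inhabits x) (is_inverse A x).
End JT.
Arguments zeroA {S} z A.
Arguments plusA {S} p {A} x y.
Arguments is_inverse {S} z p {A} x y.
Arguments Inv {S} z p {A} x.
Arguments negA {S} z p {A} x.

Definition jonsson_tarski (V : variety) (z : term (vsig V) Empty_set)
  (p : term (vsig V) bool) : Prop :=
  forall A : algebra (vsig V), in_variety V A ->
  forall x : A, plusA p x (zeroA z A) = x /\ plusA p (zeroA z A) x = x.

Definition bimorphism (S : signature) (A B C : algebra S) (h : A -> B -> C) : Prop :=
  (forall a, hom (h a)) /\ (forall b, hom (fun a => h a b)).
Arguments bimorphism {S A B C} h.

Definition is_tensor (V : variety) (A B T : algebra (vsig V)) (t : A -> B -> T) : Prop :=
  in_variety V T /\ bimorphism t /\
  forall C : algebra (vsig V), in_variety V C ->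
  forall h : A -> B -> C, bimorphism h ->
  exists g : T -> C, hom g /\ (forall a b, g (t a b) = h a b) /\
    (forall g' : T -> C, hom g' -> (forall a b, g' (t a b) = h a b) ->
       forall w, g' w = g w).
Arguments is_tensor {V A B T} t.

Definition free1 (V : variety) (F : algebra (vsig V)) (g : F) : Prop :=
  in_variety V F /\
  forall C : algebra (vsig V), in_variety V C -> forall c : C,
  exists f : F -> C, hom f /\ f g = c /\
    (forall f' : F -> C, hom f' -> f' g = c -> forall w, f' w = f w).
Arguments free1 {V F} g.

(* a monoid (A, m, e) in (V, tensor, F1), with A (x) A given by (T, t) and
   F1 given by (F, g); the associativity and unit laws are written out on the
   generating elements  (a (x) b) (x) c  resp.  g (x) a, a (x) g. *)
Definition is_V_monoid (V : variety) (A T F : algebra (vsig V))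
  (t : A -> A -> T) (g : F) (m : T -> A) (e : F -> A) : Prop :=
  hom m /\ hom e /\
  (forall a b c, m (t (m (t a b)) c) = m (t a (m (t b c)))) /\
  (forall a, m (t (e g) a) = a /\ m (t a (e g)) = a).
Arguments is_V_monoid {V A T F} t g m e.

(* mul : G x G -> G homomorphism, e : 1 -> G homomorphism (1 = terminal,
   one-element algebra), inv : G -> G homomorphism, plus the group laws. *)
Definition internal_group (S : signature) (G : algebra S)
  (mul : G -> G -> G) (e : G) (inv : G -> G) : Prop :=
  (forall o (a b : 'I_(arity o) -> G),
      mul (interp G o a) (interp G o b) = interp G o (fun i => mul (a i) (b i))) /\
  (forall o, interp G o (fun _ => e) = e) /\
  hom inv /\
  (forall x y w, mul (mul x y) w = mul x (mul y w)) /\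
  (forall x, mul e x = x /\ mul x e = x) /\
  (forall x, mul (inv x) x = e /\ mul x (inv x) = e).
Arguments internal_group {S G} mul e inv.

From Stdlib Require Import ClassicalEpsilon FunctionalExtensionality ProofIrrelevance.
From mathcomp Require Import all_boot.

(* In an entropic algebra every basic operation commutes with every term
   operation, in particular with 0 and +.  For a Jonsson-Tarski variety the
   Eckmann-Hilton argument then makes + associative and commutative, inverses
   unique, and an operation applied to inverses yields the inverse of its value;
   so Inv(A) is a subalgebra on which x |-> -x is a homomorphism, and
   homomorphisms preserve invertibility and negation.  Pure tensors a (x) b with
   a invertible are invertible since a |-> a (x) b is a homomorphism, and the
   pure tensors generate the tensor product.  Conversely, the structure maps of
   any internal group G commute with 0 and +, so Eckmann-Hilton identifies its
   unit with 0 and its multiplication with +: every element of G is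
   invertible. *)

Lemma proj1_sig_inj (T : Type) (P : T -> Prop) : injective (@proj1_sig T P).
Proof. exact: eq_sig_hprop (fun x => @proof_irrelevance (P x)). Qed.

Section TermOperations.
Context {S : signature} {z : term S Empty_set} {p : term S bool}.

Definition entropic_algebra (A : algebra S) : Prop :=
  forall (o1 o2 : op S) (x : 'I_(arity o1) -> 'I_(arity o2) -> A),
    interp A o1 (fun i => interp A o2 (fun j => x i j)) =
    interp A o2 (fun j => interp A o1 (fun i => x i j)).

Lemma hom_comp {A B C : algebra S} {f : A -> B} {g : B -> C} :
  hom f -> hom g -> hom (g \o f).
Proof. by move=> homf homg o args /=; rewrite homf homg. Qed.

Lemma val_subalg_hom {A : algebra S} {P : A -> Prop} (HP : op_closed P) :
  hom (fun x : subalg HP => proj1_sig x).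
Proof. by []. Qed.

Lemma hom_eval {A B : algebra S} {f : A -> B} (homf : hom f) {X : Type}
    (env : X -> A) (t : term S X) :
  f (eval A env t) = eval B (f \o env) t.
Proof.
elim: t => [x | o args IH] //=.
by rewrite homf; congr (interp B o _); exact: functional_extensionality IH.
Qed.

Lemma interp_eval {A : algebra S} (entA : entropic_algebra A) {X : Type}
    (t : term S X) (o : op S) (m : X -> 'I_(arity o) -> A) :
  eval A (fun x => interp A o (m x)) t = interp A o (fun i => eval A (m^~ i) t).
Proof.
elim: t => [x | o' args IH] //=.
rewrite -(entA o' o (fun k i => eval A (m^~ i) (args k))).
by congr (interp A o' _); exact: functional_extensionality IH.
Qed.

Lemma eval_eval {A : algebra S} (entA : entropic_algebra A) {X Y : Type}
    (t1 : term S X) (t2 : term S Y) (m : X -> Y -> A) :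
  eval A (fun x => eval A (m x) t2) t1 = eval A (fun y => eval A (m^~ y) t1) t2.
Proof.
elim: t2 => [y | o args IH] //=.
by rewrite interp_eval //; congr (interp A o _); exact: functional_extensionality IH.
Qed.

Lemma zeroA_eval {A : algebra S} (env : Empty_set -> A) : eval A env z = zeroA z A.
Proof. by congr (eval A _ z); apply: functional_extensionality => -[]. Qed.

Lemma hom_zeroA {A B : algebra S} {f : A -> B} (homf : hom f) :
  f (zeroA z A) = zeroA z B.
Proof. by rewrite [LHS](hom_eval homf) zeroA_eval. Qed.

Lemma hom_plusA {A B : algebra S} {f : A -> B} (homf : hom f) (x y : A) :
  f (plusA p x y) = plusA p (f x) (f y).
Proof.
rewrite [LHS](hom_eval homf); congr (eval B _ p).
by apply: functional_extensionality => -[].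
Qed.

Lemma interp_zeroA {A : algebra S} (entA : entropic_algebra A) (o : op S) :
  interp A o (fun=> zeroA z A) = zeroA z A.
Proof.
rewrite -[RHS](zeroA_eval (fun e => interp A o (fun=> match e with end))).
by rewrite interp_eval.
Qed.

Lemma plusA_interp {A : algebra S} (entA : entropic_algebra A) (o : op S)
    (a b : 'I_(arity o) -> A) :
  plusA p (interp A o a) (interp A o b) = interp A o (fun i => plusA p (a i) (b i)).
Proof.
rewrite -interp_eval //; congr (eval A _ p).
by apply: functional_extensionality => -[].
Qed.

Lemma plusA_interchange {A : algebra S} (entA : entropic_algebra A) (a b c d : A) :
  plusA p (plusA p a b) (plusA p c d) = plusA p (plusA p a c) (plusA p b d).
Proof.
pose m (x y : bool) := if x then (if y then a else b) else (if y then c else d).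
transitivity (eval A (fun x => eval A (m x) p) p).
  by congr (eval A _ p); apply: functional_extensionality => -[].
rewrite eval_eval //; congr (eval A _ p).
by apply: functional_extensionality => -[].
Qed.

Lemma negA_spec {A : algebra S} {x : A} : Inv z p x -> is_inverse z p x (negA z p x).
Proof. exact: epsilon_spec. Qed.

Lemma Inv_negA {A : algebra S} {x : A} : Inv z p x -> Inv z p (negA z p x).
Proof. by move=> /negA_spec[xn nx]; exists x. Qed.

Lemma hom_is_inverse {A B : algebra S} {f : A -> B} (homf : hom f) (x y : A) :
  is_inverse z p x y -> is_inverse z p (f x) (f y).
Proof.
by case=> xy yx; rewrite /is_inverse -!(hom_plusA homf) xy yx (hom_zeroA homf).
Qed.

Lemma hom_Inv {A B : algebra S} {f : A -> B} (homf : hom f) (x : A) :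
  Inv z p x -> Inv z p (f x).
Proof. by case=> y /(hom_is_inverse homf); exists (f y). Qed.

Lemma Inv_zeroA {A : algebra S} (add0A : left_id (zeroA z A) (@plusA S p A)) :
  Inv z p (zeroA z A).
Proof. by exists (zeroA z A); split; apply: add0A. Qed.

Section InvertibleElements.
Context {A : algebra S} (entA : entropic_algebra A).
Hypotheses (add0A : left_id (zeroA z A) (@plusA S p A))
           (addA0 : right_id (zeroA z A) (@plusA S p A)).

Lemma plusA_comm (a b : A) : plusA p a b = plusA p b a.
Proof.
rewrite -[a in LHS]add0A -[b in LHS]addA0 plusA_interchange //.
by rewrite add0A addA0.
Qed.

Lemma plusA_assoc (a b c : A) : plusA p (plusA p a b) c = plusA p a (plusA p b c).
Proof. by rewrite -[c in LHS]add0A plusA_interchange // addA0. Qed.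

Lemma is_inverse_unique {x y y' : A} :
  is_inverse z p x y -> is_inverse z p x y' -> y = y'.
Proof.
case=> _ yx [xy' _].
by rewrite -[LHS]addA0 -xy' -plusA_assoc yx add0A.
Qed.

Lemma negA_eq (x y : A) : is_inverse z p x y -> negA z p x = y.
Proof.
move=> xy; have Ix : Inv z p x by exists y.
exact: is_inverse_unique (negA_spec Ix) xy.
Qed.

Lemma is_inverse_interp (o : op S) (a b : 'I_(arity o) -> A) :
  (forall i, is_inverse z p (a i) (b i)) -> is_inverse z p (interp A o a) (interp A o b).
Proof.
move=> ab; rewrite /is_inverse !plusA_interp // -(interp_zeroA entA o).
by split; congr (interp A o _); apply: functional_extensionality => i; case: (ab i).
Qed.

Lemma Inv_op_closed : op_closed (Inv z p (A:=A)).
Proof.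
move=> o args Iargs; exists (interp A o (fun i => negA z p (args i))).
by apply: is_inverse_interp => i; apply: negA_spec.
Qed.

Lemma negA_interp (o : op S) (args : 'I_(arity o) -> A) :
  (forall i, Inv z p (args i)) ->
  negA z p (interp A o args) = interp A o (fun i => negA z p (args i)).
Proof.
by move=> Iargs; apply: negA_eq; apply: is_inverse_interp => i; apply: negA_spec.
Qed.

Lemma Inv_plusA {x y : A} : Inv z p x -> Inv z p y -> Inv z p (plusA p x y).
Proof.
move=> [x' [xx' x'x]] [y' [yy' y'y]]; exists (plusA p x' y').
by split; rewrite plusA_interchange // ?xx' ?yy' ?x'x ?y'y add0A.
Qed.

Lemma hom_negA {B : algebra S} {f : B -> A} (homf : hom f) (x : B) :
  Inv z p x -> f (negA z p x) = negA z p (f x).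
Proof. by move=> /negA_spec /(hom_is_inverse homf) /negA_eq. Qed.

Section InvGroup.
Variable HI : op_closed (Inv z p (A:=A)).

Definition Inv_add (x y : subalg HI) : subalg HI :=
  exist _ (plusA p (proj1_sig x) (proj1_sig y)) (Inv_plusA (proj2_sig x) (proj2_sig y)).
Definition Inv_zero : subalg HI := exist _ (zeroA z A) (Inv_zeroA add0A).
Definition Inv_opp (x : subalg HI) : subalg HI :=
  exist _ (negA z p (proj1_sig x)) (Inv_negA (proj2_sig x)).

Lemma Inv_addC (x y : subalg HI) : Inv_add x y = Inv_add y x.
Proof. by apply: proj1_sig_inj; apply: plusA_comm. Qed.

Lemma Inv_internal_group : internal_group Inv_add Inv_zero Inv_opp.
Proof.
split; [|split; [|split; [|split; [|split]]]].
- by move=> o a b; apply: proj1_sig_inj; apply: plusA_interp.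
- by move=> o; apply: proj1_sig_inj; apply: interp_zeroA.
- move=> o args; apply: proj1_sig_inj; apply: negA_interp => i.
  exact: proj2_sig.
- by move=> x y w; apply: proj1_sig_inj; apply: plusA_assoc.
- by move=> x; split; apply: proj1_sig_inj; [apply: add0A | apply: addA0].
- by move=> [x Ix]; have [? ?] := negA_spec Ix; split; apply: proj1_sig_inj.
Qed.

End InvGroup.
End InvertibleElements.

Lemma subalg_Inv {A : algebra S} (HI : op_closed (Inv z p (A:=A))) (x : subalg HI) :
  Inv z p x.
Proof.
case: x => x Ix; exists (exist _ (negA z p x) (Inv_negA Ix)).
have [xn nx] := negA_spec Ix.
by split; apply: proj1_sig_inj;
  rewrite (hom_plusA (val_subalg_hom HI)) (hom_zeroA (val_subalg_hom HI)).
Qed.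

Lemma eval_const {G : algebra S} (e : G) :
  (forall o, interp G o (fun=> e) = e) -> forall X (t : term S X), eval G (fun=> e) t = e.
Proof.
move=> interp_e X; elim=> [x | o args IH] //=.
by rewrite -[RHS](interp_e o); congr (interp G o _); exact: functional_extensionality IH.
Qed.

Lemma eval_mul {G : algebra S} (mul : G -> G -> G) :
  (forall o (a b : 'I_(arity o) -> G),
      mul (interp G o a) (interp G o b) = interp G o (fun i => mul (a i) (b i))) ->
  forall X (env1 env2 : X -> G) (t : term S X),
    mul (eval G env1 t) (eval G env2 t) = eval G (fun x => mul (env1 x) (env2 x)) t.
Proof.
move=> mul_interp X env1 env2; elim=> [x | o args IH] //=.
by rewrite mul_interp; congr (interp G o _); exact: functional_extensionality IH.
Qed.

Lemma internal_group_is_inverse {G : algebra S}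
    (mul : G -> G -> G) (e : G) (inv : G -> G) :
  left_id (zeroA z G) (@plusA S p G) -> right_id (zeroA z G) (@plusA S p G) ->
  internal_group mul e inv -> forall x, is_inverse z p x (inv x).
Proof.
move=> add0G addG0 [mul_interp [interp_e [_ [_ [mul1 mulV]]]]].
have zeroG : zeroA z G = e by rewrite -(zeroA_eval (fun=> e)) eval_const.
have mul_plusA x y : mul x y = plusA p x y.
  transitivity (mul (plusA p x (zeroA z G)) (plusA p (zeroA z G) y)).
    by rewrite addG0 add0G.
  rewrite /plusA eval_mul //; congr (eval G _ p).
  apply: functional_extensionality => -[]; rewrite zeroG.
  - by case: (mul1 x).
  - by case: (mul1 y).
by move=> x; rewrite /is_inverse -!mul_plusA zeroG; case: (mulV x).
Qed.

End TermOperations.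

Section Variety.
Context {V : variety}.

Lemma subalg_in_variety {A : algebra (vsig V)} {P : A -> Prop} (HP : op_closed P) :
  in_variety V A -> in_variety V (subalg HP).
Proof.
move=> varA l r lr env; apply: proj1_sig_inj.
by rewrite !(hom_eval (val_subalg_hom HP)); apply: varA.
Qed.

Lemma tensor_ind {A B T : algebra (vsig V)} {t : A -> B -> T} {P : T -> Prop}
    (HP : op_closed P) :
  is_tensor t -> (forall a b, P (t a b)) -> forall w, P w.
Proof.
move=> [varT [[homtl homtr] univ]] Pt w.
pose tP a b : subalg HP := exist P (t a b) (Pt a b).
have bimor_tP : bimorphism tP.
  by split=> [a | b] o args; apply: proj1_sig_inj; [exact: homtl | exact: homtr].
have [g [homg [gtP _]]] := univ _ (subalg_in_variety HP varT) tP bimor_tP.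
have [g0 [_ [_ g0_uniq]]] := univ _ varT t (conj homtl homtr).
(* [id] and [proj1_sig \o g] both extend [t], so they agree by uniqueness. *)
have id_g0 : w = g0 w := g0_uniq id (fun _ _ => erefl) (fun _ _ => erefl) w.
have vg_g0 : proj1_sig (g w) = g0 w.
  apply: (g0_uniq _ (hom_comp homg (val_subalg_hom HP)) _ w).
  by move=> a b /=; rewrite gtP.
by rewrite id_g0 -vg_g0; apply: proj2_sig.
Qed.

Context {z : term (vsig V) Empty_set} {p : term (vsig V) bool}.
Hypotheses (HE : entropic V) (HJT : jonsson_tarski V z p).

Lemma plus0A {A : algebra (vsig V)} :
  in_variety V A -> left_id (zeroA z A) (@plusA _ p A).
Proof. by move=> varA x; case: (HJT A varA x). Qed.

Lemma plusA0 {A : algebra (vsig V)} :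
  in_variety V A -> right_id (zeroA z A) (@plusA _ p A).
Proof. by move=> varA x; case: (HJT A varA x). Qed.

Lemma is_tensor_Inv {A B T : algebra (vsig V)} {t : A -> B -> T} :
  is_tensor t -> (forall a : A, Inv z p a) -> forall w : T, Inv z p w.
Proof.
move=> tensor_t IA; have [varT [[_ homtr] _]] := tensor_t.
apply: (tensor_ind (Inv_op_closed (HE T varT)) tensor_t) => a b.
exact: hom_Inv (homtr b) a (IA a).
Qed.

End Variety.

Theorem lemma1p5 (V : variety) (z : term (vsig V) Empty_set) (p : term (vsig V) bool)
  (HE : entropic V) (HJT : jonsson_tarski V z p)
  (A : algebra (vsig V)) (HA : in_variety V A) :
  (* (1) Inv(A) is a subalgebra, and an internal submonoid of (A, +, 0) *)
  (op_closed (Inv z p (A:=A)) /\ Inv z p (zeroA z A) /\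
   (forall x y : A, Inv z p x -> Inv z p y -> Inv z p (plusA p x y))) /\
  (* (2) homomorphisms restrict to Inv *)
  (forall (B : algebra (vsig V)), in_variety V B ->
     forall f : A -> B, hom f -> forall x, Inv z p x -> Inv z p (f x)) /\
  (* (2) b_r : a |-> a (x) b restricts to Inv(A) -> Inv(A (x) B) *)
  (forall (B T : algebra (vsig V)) (t : A -> B -> T), in_variety V B ->
     is_tensor t -> forall (b : B) (a : A), Inv z p a -> Inv z p (t a b)) /\
  (* (2) upsilon_A (x) upsilon_B factors through Inv(A (x) B) *)
  (forall (B T : algebra (vsig V)) (t : A -> B -> T), in_variety V B ->
     is_tensor t ->
     forall (HIA : op_closed (Inv z p (A:=A))) (HIB : op_closed (Inv z p (A:=B)))
       (TI : algebra (vsig V)) (ti : subalg HIA -> subalg HIB -> TI),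
     is_tensor ti ->
     forall u : TI -> T, hom u ->
       (forall x y, u (ti x y) = t (proj1_sig x) (proj1_sig y)) ->
       forall w, Inv z p (u w)) /\
  (* (2) for a monoid (A, m, e) in V, m(a (x) b) is invertible for invertible a, b *)
  (forall (T F : algebra (vsig V)) (t : A -> A -> T) (g : F) (m : T -> A) (e : F -> A),
     is_tensor t -> free1 g -> is_V_monoid t g m e ->
     forall a b, Inv z p a -> Inv z p b -> Inv z p (m (t a b))) /\
  (* (3) homomorphisms preserve negatives *)
  (forall (B : algebra (vsig V)), in_variety V B ->
     forall f : A -> B, hom f -> forall x, Inv z p x -> f (negA z p x) = negA z p (f x)) /\
  (* (4) x |-> -x is a homomorphism Inv(A) -> Inv(A) *)
  ((forall x : A, Inv z p x -> Inv z p (negA z p x)) /\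
   (forall o (args : 'I_(arity o) -> A), (forall i, Inv z p (args i)) ->
      negA z p (interp A o args) = interp A o (fun i => negA z p (args i)))) /\
  (* (4) Inv(A), with +, 0, -, is a commutative internal group in V *)
  (forall HIA : op_closed (Inv z p (A:=A)),
     exists (mul : subalg HIA -> subalg HIA -> subalg HIA) (e : subalg HIA)
            (inv : subalg HIA -> subalg HIA),
       internal_group mul e inv /\ (forall x y, mul x y = mul y x) /\
       (forall x y, proj1_sig (mul x y) = plusA p (proj1_sig x) (proj1_sig y)) /\
       proj1_sig e = zeroA z A /\
       (forall x, proj1_sig (inv x) = negA z p (proj1_sig x))) /\
  (* (4) ... and the largest internal group contained in A *)
  (forall (G : algebra (vsig V)), in_variety V G ->
     forall (mul : G -> G -> G) (e : G) (inv : G -> G), internal_group mul e inv ->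
     forall j : G -> A, hom j -> injective j -> forall x, Inv z p (j x)).
Proof.
have entA : entropic_algebra A := HE A HA.
have add0A := plus0A HJT HA; have addA0 := plusA0 HJT HA.
split.
  split; first exact: Inv_op_closed entA.
  by split; [exact: Inv_zeroA | move=> x y; apply: (Inv_plusA entA add0A)].
split; first by move=> B _ f homf x; apply: hom_Inv.
split; first by move=> B T t _ [_ [[_ homtr] _]] b a; apply: (hom_Inv (homtr b) a).
split.
  move=> B T t _ _ HIA HIB TI ti tensor_ti u homu _ w; apply: (hom_Inv homu w).
  exact: (is_tensor_Inv HE tensor_ti (subalg_Inv HIA)).
split.
  move=> T F t g m e [_ [[_ homtr] _]] _ [homm _] a b Ia _.
  exact: hom_Inv (hom_comp (homtr b) homm) a Ia.
split.
  move=> B varB f homf.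
  exact: (hom_negA (HE B varB) (plus0A HJT varB) (plusA0 HJT varB) homf).
split; first by split=> [x | o args]; [exact: Inv_negA | exact: negA_interp].
split.
  move=> HIA; exists (Inv_add entA add0A HIA), (Inv_zero add0A HIA), (Inv_opp HIA).
  split; first exact: Inv_internal_group.
  by split; first exact: Inv_addC.
move=> G varG mul e inv grp j homj _ x; apply: (hom_Inv homj x).
exists (inv x).
exact: internal_group_is_inverse (plus0A HJT varG) (plusA0 HJT varG) grp x.
Qed.
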